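(* Let $P$ be a simple closed $n$-gon, $n\ge4$, in $\mathbb{R}^2$, and let $a\in\mathbb{R}^2\setminus P$. If every ray emanating from $a$ meets $P$, then $a$ sees via $\mathbb{R}^2\setminus P$ two non-adjacent vertices of $P$, i.e. there are vertices $c,c'$ of $P$ that are not joined by an edge of $P$ (and are distinct) with $]a,c[\,\subset\mathbb{R}^2\setminus P$ and $]a,c'[\,\subset\mathbb{R}^2\setminus P$.
   Context: A simple closed $n$-gon is $P=\bigcup_{i=1}^n[p_{i-1},p_i]$ with distinct vertices $p_0,\dots,p_{n-1}$, $p_n=p_0$, whose edges meet only in common endpoints of consecutive edges. A ray emanating from $a$ is a set $\{a+\lambda w:\lambda\ge0\}$ with $w\ne0$. $]x,y[$ denotes the open segment. *)

From HB Require Import structures.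
From mathcomp Require Import all_boot all_order all_algebra.
From mathcomp Require Import reals.
Set Implicit Arguments. Unset Strict Implicit. Unset Printing Implicit Defensive.
Import Order.TTheory GRing.Theory Num.Theory.
Local Open Scope ring_scope.

Definition point (R : numDomainType) := (R * R)%type.

Definition affine (R : numDomainType) (a b : point R) (t : R) : point R :=
  (a.1 + t * (b.1 - a.1), a.2 + t * (b.2 - a.2)).

Definition cseg (R : numDomainType) (a b : point R) (x : point R) : Prop :=
  exists t : R, 0 <= t /\ t <= 1 /\ x = affine a b t.

Definition oseg (R : numDomainType) (a b : point R) (x : point R) : Prop :=
  exists t : R, 0 < t /\ t < 1 /\ x = affine a b t.

(* Polygon given by n and vertices p 0, ..., p (n-1); indices taken mod n,
   so p_n = p_0.  Edge i is [p_i, p_{i+1 mod n}]. *)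
Definition edge (R : numDomainType) (n : nat) (p : nat -> point R) (i : nat)
  : point R -> Prop := cseg (p i) (p ((i.+1) %% n)%N).

Definition polygon (R : numDomainType) (n : nat) (p : nat -> point R)
  (x : point R) : Prop := exists2 i, (i < n)%N & edge n p i x.

Definition adjacent_idx (n i j : nat) : Prop :=
  j = (i.+1 %% n)%N \/ i = (j.+1 %% n)%N.

Definition simple_polygon (R : numDomainType) (n : nat) (p : nat -> point R)
  : Prop :=
  (forall i j, (i < n)%N -> (j < n)%N -> i <> j -> p i <> p j) /\
  (forall i j, (i < n)%N -> (j < n)%N -> i <> j ->
     forall x, edge n p i x -> edge n p j x ->
       (j = (i.+1 %% n)%N /\ x = p j) \/ (i = (j.+1 %% n)%N /\ x = p i)).

Definition ray (R : numDomainType) (a w : point R) (x : point R) : Prop :=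
  exists lam : R, 0 <= lam /\ x = (a.1 + lam * w.1, a.2 + lam * w.2).

From HB Require Import structures.
From mathcomp Require Import all_boot all_order all_algebra.
From mathcomp Require Import reals.
From mathcomp Require Import ring lra zify.
From Stdlib Require Import Classical.
Import Order.TTheory GRing.Theory Num.Theory.
Local Open Scope ring_scope.

(* Look from a in any direction d. The ray meets P first at a point q with [a, q[ free.
   If q is a vertex, a sees it. Otherwise q lies inside an edge [s, t] whose endpoints
   are strictly on both sides of the ray; sweeping the triangle a q s from aq towards s,
   the first vertex met (the nearest one on its ray) is seen from a, and likewise on the
   side of t. So every direction gives either a visible vertex on the ray or two visible
   vertices strictly on both sides of its line. Starting from one visible vertex c, the
   direction from c to a, and if needed the perpendicular one, yields three distinct
   visible vertices; as n >= 4, two of them are not adjacent. *)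

Lemma mem_iota0 n j : (j \in iota 0 n) = (j < n)%N.
Proof. by rewrite mem_iota; lia. Qed.

Lemma modSn_neq n i : (1 < n)%N -> (i < n)%N -> (i.+1 %% n)%N <> i.
Proof.
move=> n1 ni; have [in_|] := ltnP i.+1 n; first by rewrite modn_small //; lia.
by move=> ni'; rewrite (_ : i.+1 = n) ?modnn; lia.
Qed.

Lemma ex_argmin_seq (R : realDomainType) (T : eqType) (s : seq T) (P : T -> Prop)
    (f : T -> R) : (exists2 x, x \in s & P x) ->
  exists x, [/\ x \in s, P x & forall y, y \in s -> P y -> f x <= f y].
Proof.
elim: s => [[x]//|x s IH] [y ys Py].
have [[m ms [Pm mmin]]|no_s] := classic (exists2 m, m \in s & P m /\
    forall z, z \in s -> P z -> f m <= f z).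
  have [[Px le_xm]|not_x] := classic (P x /\ f x <= f m).
    exists x; split=> [|//|z]; first exact: mem_head.
    by rewrite inE => /predU1P [-> //|zs Pz]; apply: le_trans le_xm (mmin z zs Pz).
  exists m; split=> [|//|z]; first by rewrite inE ms orbT.
  rewrite inE => /predU1P [-> Px|]; last exact: mmin.
  by rewrite leNgt; apply/negP => lt_xm; apply: not_x; split=> //; apply: ltW.
have s_free : ~ exists2 z, z \in s & P z.
  by case/IH => m [ms Pm mmin]; apply: no_s; exists m.
exists x; split=> [|//|z]; first exact: mem_head.
  by move: ys; rewrite inE => /predU1P [<- //|ys]; case: s_free; exists y.
by rewrite inE => /predU1P [-> //|zs Pz]; case: s_free; exists z.
Qed.

Lemma ler_ratio (R : numFieldType) (a b c d : R) : 0 < b -> 0 < d ->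
  (- (a / b) <= - (c / d)) = (c * b <= a * d).
Proof. by move=> b0 d0; rewrite lerN2 ler_pdivrMr // mulrAC ler_pdivlMr. Qed.

Lemma exit_param {R : realFieldType} (f0 f1 g0 g1 : R) : 0 < f0 -> 0 < g0 ->
  f1 <= 0 \/ g1 <= 0 ->
  exists th, [/\ 0 < th, th <= 1, 0 <= f0 + th * (f1 - f0), 0 <= g0 + th * (g1 - g0)
    & f0 + th * (f1 - f0) = 0 \/ g0 + th * (g1 - g0) = 0].
Proof.
have root (h0 h1 : R) : 0 < h0 -> h1 <= 0 ->
    [/\ 0 < h0 / (h0 - h1), h0 / (h0 - h1) <= 1 & h0 + h0 / (h0 - h1) * (h1 - h0) = 0].
  move=> h00 h10; have hd : 0 < h0 - h1 by lra.
  split; first exact: divr_gt0.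
    by rewrite ler_pdivrMr // mul1r; lra.
  have -> : h1 - h0 = - (h0 - h1) by rewrite opprB.
  by rewrite mulrN divfK ?subrr // lt0r_neq0.
have before (h0 h1 th th' : R) : 0 < h0 -> 0 <= th -> th <= th' ->
    h0 + th' * (h1 - h0) = 0 -> 0 <= h0 + th * (h1 - h0).
  move=> h00 th0 le e.
  have th'0 : 0 < th'.
    rewrite lt_neqAle (le_trans th0 le) andbT; apply/eqP => z.
    by move: e; rewrite -z mul0r addr0; lra.
  have key : (h0 + th * (h1 - h0)) * th' = h0 * (th' - th).
    transitivity (h0 * th' + th * (th' * (h1 - h0))); first by ring.
    by rewrite (_ : th' * (h1 - h0) = - h0); [ring | lra].
  by rewrite -(pmulr_lge0 _ th'0) key; apply: mulr_ge0; lra.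
move=> f00 g00 hfg; have [f10|f10] := leP f1 0; have [g10|g10] := leP g1 0.
- have [tf0 tf1 ef] := root _ _ f00 f10; have [tg0 tg1 eg] := root _ _ g00 g10.
  have [le_fg|le_gf] := leP (f0 / (f0 - f1)) (g0 / (g0 - g1)).
    exists (f0 / (f0 - f1)); split=> //; [lra | | by left].
    exact: before (ltW tf0) le_fg eg.
  exists (g0 / (g0 - g1)); split=> //; [| lra | by right].
  exact: before (ltW tg0) (ltW le_gf) ef.
- have [tf0 tf1 ef] := root _ _ f00 f10.
  by exists (f0 / (f0 - f1)); split=> //; [lra | nra | left].
- have [tg0 tg1 eg] := root _ _ g00 g10.
  by exists (g0 / (g0 - g1)); split=> //; [nra | lra | right].
- by exfalso; case: hfg; lra.
Qed.

Definition sees {R : numDomainType} (n : nat) (p : nat -> point R) (a x : point R) :=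
  forall y, oseg a x y -> ~ polygon n p y.

Definition visible {R : numDomainType} (n : nat) (p : nat -> point R) (a : point R) k :=
  (k < n)%N /\ sees n p a (p k).

Section Plane.
Context {R : realFieldType}.
Implicit Types (a d q r s t u v w x y z : point R).

Lemma point_eq u v : u.1 = v.1 -> u.2 = v.2 -> u = v.
Proof. by case: u v => ? ? [? ?] /= -> ->. Qed.

Definition vec a b : point R := (b.1 - a.1, b.2 - a.2).
Definition cross u v : R := u.1 * v.2 - u.2 * v.1.
Definition along a d (l : R) : point R := (a.1 + l * d.1, a.2 + l * d.2).
Definition lincomb (al : R) u (be : R) v : point R :=
  (al * u.1 + be * v.1, al * u.2 + be * v.2).
Definition proj d u : R := (u.1 * d.1 + u.2 * d.2) / (d.1 ^+ 2 + d.2 ^+ 2).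

Lemma vec0 x : vec (0, 0) x = x.
Proof. by apply: point_eq; rewrite /= subr0. Qed.

Lemma along0 a d : along a d 0 = a.
Proof. by apply: point_eq; rewrite /= mul0r addr0. Qed.

Lemma affine_along a d (l th : R) : affine a (along a d l) th = along a d (th * l).
Proof. by apply: point_eq => /=; ring. Qed.

Lemma normsq_gt0 d : d <> (0, 0) -> 0 < d.1 ^+ 2 + d.2 ^+ 2.
Proof.
move=> d0; rewrite lt_neqAle addr_ge0 ?sqr_ge0 // andbT eq_sym.
rewrite paddr_eq0 ?sqr_ge0 // !sqrf_eq0; apply/negP => /andP[/eqP d1 /eqP d2].
by apply: d0; apply: point_eq.
Qed.

Lemma along_inj {a d} : d <> (0, 0) -> injective (along a d).
Proof.
move=> /normsq_gt0 d0 l1 l2 /pair_equal_spec [e1 e2].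
have {}e1 : l1 * d.1 = l2 * d.1 by lra.
have {}e2 : l1 * d.2 = l2 * d.2 by lra.
apply: (mulIf (lt0r_neq0 d0)).
by rewrite !mulrDr !expr2 !mulrA e1 e2.
Qed.

Lemma along_proj {a d x} : d <> (0, 0) -> cross d (vec a x) = 0 ->
  x = along a d (proj d (vec a x)).
Proof.
move=> /normsq_gt0 d0 c0; have nz := lt0r_neq0 d0.
set N := _ + _ in d0 nz; set k := proj _ _.
have hk : k * N = (x.1 - a.1) * d.1 + (x.2 - a.2) * d.2 by rewrite divfK.
move: c0; rewrite /cross /= => c0.
apply: point_eq => /=.
- suff : (x.1 - a.1) * N = k * d.1 * N by move/(mulIf nz); lra.
  have -> : (x.1 - a.1) * N = ((x.1 - a.1) * d.1 + (x.2 - a.2) * d.2) * d.1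
    - d.2 * (d.1 * (x.2 - a.2) - d.2 * (x.1 - a.1)) by rewrite /N; ring.
  by rewrite c0 mulr0 subr0 -hk mulrAC.
- suff : (x.2 - a.2) * N = k * d.2 * N by move/(mulIf nz); lra.
  have -> : (x.2 - a.2) * N = ((x.1 - a.1) * d.1 + (x.2 - a.2) * d.2) * d.2
    + d.1 * (d.1 * (x.2 - a.2) - d.2 * (x.1 - a.1)) by rewrite /N; ring.
  by rewrite c0 mulr0 addr0 -hk mulrAC.
Qed.

Lemma cseg_start s t : cseg s t s.
Proof. by exists 0; rewrite lexx ler01; split=> //; split=> //; apply: point_eq => /=; ring. Qed.

Lemma cseg_end s t : cseg s t t.
Proof. by exists 1; rewrite lexx ler01; split=> //; split=> //; apply: point_eq => /=; ring. Qed.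

Lemma cseg_sym s t x : cseg s t x -> cseg t s x.
Proof.
move=> [th [th0 [th1 ->]]]; exists (1 - th); do 2 (split; first lra).
apply: point_eq => /=; ring.
Qed.

Lemma cseg_affine {s t x y} {th : R} :
  cseg s t x -> cseg s t y -> 0 <= th -> th <= 1 -> cseg s t (affine x y th).
Proof.
move=> [t1 [? [? ->]]] [t2 [? [? ->]]] ? ?.
exists (t1 + th * (t2 - t1)); split; first nra; split; first nra.
apply: point_eq => /=; ring.
Qed.

Lemma cseg_along_between {s t a d} {l1 l2 l : R} :
  cseg s t (along a d l1) -> cseg s t (along a d l2) -> l1 <= l -> l <= l2 ->
  cseg s t (along a d l).
Proof.
move=> e1 e2 h1 h2; have [e12|l12] := eqVneq l1 l2.
  by have -> : l = l1 by rewrite e12 in h1; lra.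
have l21 : 0 < l2 - l1 by rewrite lt_neqAle subr_ge0 eq_sym subr_eq0 eq_sym l12; lra.
set th := (l - l1) / (l2 - l1).
have eth : th * (l2 - l1) = l - l1 by rewrite divfK // lt0r_neq0.
have /(cseg_affine e1 e2) : 0 <= th by apply: divr_ge0; lra.
have -> : affine (along a d l1) (along a d l2) th = along a d (l1 + th * (l2 - l1)).
  by apply: point_eq => /=; ring.
by rewrite eth addrC subrK; apply; rewrite ler_pdivrMr // mul1r; lra.
Qed.

(* Otherwise [a] would lie between two points of [s, t]. *)
Lemma cseg_along_ge0 {s t a d} {l1 l : R} : ~ cseg s t a ->
  cseg s t (along a d l1) -> cseg s t (along a d l) -> l1 <= l -> 0 <= l -> 0 <= l1.
Proof.
move=> sa e1 e h1 h; rewrite leNgt; apply/negP => l10; apply: sa.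
by rewrite -(along0 a d); apply: (cseg_along_between e1 e); lra.
Qed.

Definition hit_candidates a d s t : seq R :=
  [:: proj d (vec a s); proj d (vec a t); cross (vec a s) (vec s t) / cross d (vec s t)].

(* The first parameter at which a line enters a segment is one of finitely many
   values computed from the data: the crossing point, or an endpoint when the
   segment lies on the line. *)
Lemma cseg_first_candidate {a d s t} {l : R} : d <> (0, 0) -> ~ cseg s t a ->
  0 <= l -> cseg s t (along a d l) ->
  exists2 c, c \in hit_candidates a d s t & [/\ 0 <= c, c <= l & cseg s t (along a d c)].
Proof.
move=> d0 sa l_ge0 hit; have [th [th0 [th1 /pair_equal_spec [e1 e2]]]] := hit.
have {}e1 : l * d.1 = s.1 - a.1 + th * (t.1 - s.1) by lra.
have {}e2 : l * d.2 = s.2 - a.2 + th * (t.2 - s.2) by lra.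
have hl : l * cross d (vec s t) = cross (vec a s) (vec s t).
  by rewrite /cross /= mulrBr !mulrA e1 e2; ring.
have [D0|D0] := eqVneq (cross d (vec s t)) 0; last first.
  by exists l; [rewrite !inE -hl mulfK // eqxx !orbT | split].
have cs : cross d (vec a s) = 0.
  have -> : cross d (vec a s) = - th * cross d (vec s t).
    rewrite /cross /=.
    have -> : s.1 - a.1 = l * d.1 - th * (t.1 - s.1) by lra.
    have -> : s.2 - a.2 = l * d.2 - th * (t.2 - s.2) by lra.
    ring.
  by rewrite D0 mulr0.
have ct : cross d (vec a t) = 0 by move: D0 cs; rewrite /cross /= => D0 cs; lra.
have ins : proj d (vec a s) \in hit_candidates a d s t by rewrite !inE eqxx.
have int : proj d (vec a t) \in hit_candidates a d s t by rewrite !inE eqxx orbT.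
move: (proj d (vec a s)) (proj d (vec a t)) ins int (along_proj d0 cs) (along_proj d0 ct).
move=> ls lt ins int es et.
have hl' : l = ls + th * (lt - ls).
  apply: (along_inj (a := a) d0); apply: point_eq => /=;
    [rewrite e1 es et | rewrite e2 es et] => /=; ring.
have [le_st|le_ts] := leP ls lt.
- have sl : ls <= l by rewrite hl' lerDl mulr_ge0 // subr_ge0.
  have ss : cseg s t (along a d ls) by rewrite -es; apply: cseg_start.
  by exists ls => //; split=> //; apply: cseg_along_ge0 sa ss hit sl l_ge0.
- have tl : lt <= l.
    rewrite hl' (_ : ls + th * (lt - ls) = lt + (1 - th) * (ls - lt)); last by ring.
    by rewrite lerDl mulr_ge0 // subr_ge0 // ltW.
  have tt : cseg s t (along a d lt) by rewrite -et; apply: cseg_end.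
  by exists lt => //; split=> //; apply: cseg_along_ge0 sa tt hit tl l_ge0.
Qed.

Lemma oseg_origin {v x} : oseg (0, 0) v x ->
  exists mu, [/\ 0 < mu, mu < 1, x.1 = mu * v.1 & x.2 = mu * v.2].
Proof. by move=> [mu [mu0 [mu1 ->]]]; exists mu; split=> //=; rewrite subr0 add0r. Qed.

Lemma cseg_crossing {a v s t} {mu : R} :
  a <> v -> 0 < mu -> mu < 1 -> cseg s t (affine a v mu) ->
  (exists2 e, e = s \/ e = t & cross (vec a v) (vec a e) < 0 \/ oseg a v e)
  \/ cseg s t a.
Proof.
move=> av mu0 mu1 hz; have [th [th0 [th1 ez]]] := hz.
pose cs := cross (vec a v) (vec a s); pose ct := cross (vec a v) (vec a t).
have hc : (1 - th) * cs + th * ct = 0.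
  have <- : cross (vec a v) (vec a (affine a v mu)) = 0 by rewrite /cross /=; ring.
  by rewrite ez /cs /ct /cross /=; ring.
have [cs0|cs0] := ltP cs 0; first by left; exists s; left.
have [ct0|ct0] := ltP ct 0; first by left; exists t; [by right | left].
have [cs0'|cs0'] := ltP 0 cs.
  have th_1 : th = 1 by nra.
  left; exists t; [by right | right]; exists mu; split=> //; split=> //.
  by rewrite ez th_1; apply: point_eq => /=; ring.
have [ct0'|ct0'] := ltP 0 ct.
  have th_0 : th = 0 by nra.
  left; exists s; [by left | right]; exists mu; split=> //; split=> //.
  by rewrite ez th_0; apply: point_eq => /=; ring.
have d0 : vec a v <> (0, 0).
  by case=> e1 e2; apply: av; apply: point_eq; lra.
have [cs_0 ct_0] : cs = 0 /\ ct = 0 by split; lra.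
move: (proj _ (vec a s)) (proj _ (vec a t)) (along_proj d0 cs_0) (along_proj d0 ct_0).
move=> ls lt es et.
have hmu : mu = ls + th * (lt - ls).
  apply: (along_inj (a := a) d0); rewrite -[along _ _ mu]/(affine a v mu) ez.
  by apply: point_eq => /=; rewrite es et /=; ring.
have endpoint (e : point R) le : e = along a (vec a v) le -> cseg s t e -> le <= mu ->
    oseg a v e \/ cseg s t a.
  move=> -> he lemu; have [le0|le0] := leP le 0.
    by right; rewrite -(along0 a (vec a v)); apply: cseg_along_between he hz _ _ => //; lra.
  by left; exists le; split=> //; split=> //; lra.
have [le_st|le_ts] := leP ls lt.
- have [] := endpoint s ls es (cseg_start _ _); first by rewrite hmu; nra.
    by left; exists s; [by left | right].
  by right.
- have [] := endpoint t lt et (cseg_end _ _); first by rewrite hmu; nra.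
    by left; exists t; [by right | right].
  by right.
Qed.

End Plane.

Section Polygon.
Context {R : realFieldType} {n : nat} {p : nat -> point R}.
Implicit Types (a d q r s t u v w x y z : point R).

Lemma vertex_in_polygon {j} : (j < n)%N -> polygon n p (p j).
Proof. by move=> jn; exists j => //; apply: cseg_start. Qed.

Lemma sees_along {a d} {l0 m : R} : ~ polygon n p a -> sees n p a (along a d l0) ->
  0 <= m -> m < l0 -> ~ polygon n p (along a d m).
Proof.
move=> a_out vis m0 ml; have [<-|nz] := eqVneq 0 m; first by rewrite along0.
have l0p : 0 < l0 by lra.
apply: vis; exists (m / l0); split; [|split].
- by rewrite divr_gt0 // lt_neqAle nz.
- by rewrite ltr_pdivrMr // mul1r.
- by rewrite affine_along divfK // lt0r_neq0.
Qed.

Lemma first_hit {a d} : ~ polygon n p a -> d <> (0, 0) ->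
  (exists x, ray a d x /\ polygon n p x) ->
  exists l0, [/\ 0 < l0, polygon n p (along a d l0) & sees n p a (along a d l0)].
Proof.
move=> a_out d0 [_ [[l [l_ge0 ->]] hit]].
set cands := flatten [seq hit_candidates a d (p j) (p (j.+1 %% n)%N) | j <- iota 0 n].
have cand_below m : 0 <= m -> polygon n p (along a d m) ->
    exists2 c, c \in cands & (0 <= c /\ polygon n p (along a d c)) /\ c <= m.
  move=> m0 [j jn ej].
  have sa : ~ cseg (p j) (p (j.+1 %% n)%N) a by move=> h; apply: a_out; exists j.
  have [c cin [c0 cm ec]] := cseg_first_candidate d0 sa m0 ej.
  exists c; last by split=> //; split=> //; exists j.
  by apply/flatten_mapP; exists j; rewrite ?mem_iota.
have [c [cin [c0 chit] cmin]] : exists c, [/\ c \in cands,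
    0 <= c /\ polygon n p (along a d c)
    & forall e, e \in cands -> 0 <= e /\ polygon n p (along a d e) -> c <= e].
  by apply: ex_argmin_seq; have [c cin [Pc _]] := cand_below l l_ge0 hit; exists c.
have cpos : 0 < c.
  by rewrite lt_neqAle c0 andbT; apply/eqP => c_0; apply: a_out; rewrite -(along0 a d) c_0.
exists c; split=> // y [th [th0 [th1 ->]]]; rewrite affine_along => hy.
have [e ein [Pe le]] := cand_below _ (ltW (mulr_gt0 th0 cpos)) hy.
have := cmin e ein Pe; nra.
Qed.

End Polygon.

Section AffineTransport.
Context {R : realFieldType} {F : point R -> point R}.
Hypotheses (F_affine : forall x y th, F (affine x y th) = affine (F x) (F y) th)
  (F_inj : injective F).

Lemma edge_map n p i x : edge n (fun k => F (p k)) i (F x) <-> edge n p i x.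
Proof.
split=> [[th [th0 [th1 e]]]|[th [th0 [th1 ->]]]]; exists th; do 2 (split=> //).
  by apply: F_inj; rewrite F_affine.
Qed.

Lemma polygon_map n p x : polygon n (fun k => F (p k)) (F x) <-> polygon n p x.
Proof. by split=> -[i ni ei]; exists i => //; apply/edge_map. Qed.

Lemma edge_map_image {n p i y} : edge n (fun k => F (p k)) i y -> exists x, y = F x.
Proof. by move=> [th [_ [_ ->]]]; exists (affine (p i) (p (i.+1 %% n)%N) th). Qed.

Lemma simple_map n p : simple_polygon n p -> simple_polygon n (fun k => F (p k)).
Proof.
move=> [p_inj p_edges]; split=> [i j ni nj ij /F_inj|i j ni nj ij y ei ej].
  exact: p_inj.
have [x exy] := edge_map_image ei; subst y.
have := p_edges i j ni nj ij x ((edge_map _ _ _ _).1 ei) ((edge_map _ _ _ _).1 ej).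
by case=> -[-> ->]; [left | right].
Qed.

Lemma sees_map n p a x : sees n (fun k => F (p k)) (F a) (F x) -> sees n p a x.
Proof.
move=> vis y [th [th0 [th1 ->]]] /(polygon_map n p _).2; apply: vis.
by exists th; rewrite F_affine.
Qed.

End AffineTransport.

(* The unit cone configuration: the ray from the origin along the x-axis first meets
   the polygon at (1,0), inside the edge i, and (0,1) is an endpoint of that edge. *)
Section UnitCone.
Context {R : realFieldType} {n : nat} {p : nat -> point R} {i : nat}.
Hypotheses (p_simple : simple_polygon n p) (ni : (i < n)%N)
  (q_edge : edge n p i (1, 0))
  (q_ne_s : p i <> (1, 0)) (q_ne_t : p (i.+1 %% n)%N <> (1, 0))
  (r_end : p i = (0, 1) \/ p (i.+1 %% n)%N = (0, 1))
  (o_out : ~ polygon n p (0, 0))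
  (ox_free : forall l : R, 0 < l -> l < 1 -> ~ polygon n p (l, 0)).

Lemma edge_far_end : exists B : point R, [/\ B.1 + B.2 = 1, B.2 < 0 &
  (p i = (0, 1) /\ p (i.+1 %% n)%N = B) \/ (p (i.+1 %% n)%N = (0, 1) /\ p i = B)].
Proof.
have line (B : point R) : cseg (0, 1) B (1, 0) -> (1, 0) <> B -> B.1 + B.2 = 1 /\ B.2 < 0.
  move=> [t [t0 [t1 /pair_equal_spec [e1 e2]]]] qB; move: e1 e2 => /= e1 e2.
  have t_pos : t != 0 by apply/eqP => t_0; move: e1; rewrite t_0 mul0r addr0; lra.
  have t_lt1 : t != 1.
    by apply/eqP => t_1; apply: qB; apply: point_eq; move: e1 e2; rewrite t_1 /=; lra.
  have [t0' t1'] : 0 < t /\ t < 1 by rewrite !lt_neqAle eq_sym t_pos t_lt1 t0 t1.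
  split; nra.
case: r_end => e; move: q_edge; rewrite /edge e.
  move=> /line /(_ (nesym q_ne_t)) [B1 B2].
  by exists (p (i.+1 %% n)%N); split=> //; left.
move=> /cseg_sym /line /(_ (nesym q_ne_s)) [B1 B2].
by exists (p i); split=> //; right.
Qed.

Lemma edge_on_diag y : edge n p i y -> y.1 + y.2 = 1.
Proof.
have [B [B1 B2 ends]] := edge_far_end.
have diag (s t : point R) : s.1 + s.2 = 1 -> t.1 + t.2 = 1 -> cseg s t y -> y.1 + y.2 = 1.
  move=> hs ht [th [_ [_ ->]]] /=.
  have -> : s.1 + th * (t.1 - s.1) + (s.2 + th * (t.2 - s.2)) =
    s.1 + s.2 + th * (t.1 + t.2 - (s.1 + s.2)) by ring.
  by rewrite hs ht subrr mulr0 addr0.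
by rewrite /edge; case: ends => -[-> ->]; apply: diag; rewrite //= add0r.
Qed.

Lemma diag_on_edge {y} : y.1 + y.2 = 1 -> 0 <= y.2 -> y.2 <= 1 -> edge n p i y.
Proof.
move=> sum y0 y1.
have r_edge : edge n p i (0, 1) by case: r_end => <-; [apply: cseg_start | apply: cseg_end].
have := cseg_affine q_edge r_edge y0 y1.
by rewrite (_ : affine _ _ _ = y) //; apply: point_eq => /=; lra.
Qed.

Lemma edge_only_i {j y} : (j < n)%N -> edge n p j y -> edge n p i y ->
  0 < y.1 -> 0 <= y.2 -> j = i.
Proof.
move=> nj ej ei y1 y2; have [//|/eqP ji] := eqVneq j i.
have [B [B1 B2 ends]] := edge_far_end.
have y_end : y = p i \/ y = p (i.+1 %% n)%N.
  by case: (p_simple.2 i j ni nj (nesym ji) y ei ej) => -[e ->]; [right; rewrite e | left].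
by exfalso; case: ends => -[e1 e2]; case: y_end => ey; move: y1 y2;
  rewrite ey ?e1 ?e2 /=; lra.
Qed.

Definition in_cone (w : point R) : Prop := [/\ 0 <= w.1, 0 < w.2 & w.1 + w.2 <= 1].

(* [v] comes first when the cone is swept from the x-axis, and is nearest the
   origin on its ray. *)
Definition first_in_cone (v : point R) : Prop := forall j, (j < n)%N -> in_cone (p j) ->
  0 <= cross v (p j) /\ (cross v (p j) = 0 -> v.2 <= (p j).2).

Lemma exists_first_in_cone : exists2 k, (k < n)%N & in_cone (p k) /\ first_in_cone (p k).
Proof.
pose f j := - ((p j).1 / (p j).2).
have [k1 [k1n k1c k1min]] : exists k1, [/\ k1 \in iota 0 n, in_cone (p k1)
    & forall j, j \in iota 0 n -> in_cone (p j) -> f k1 <= f j].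
  apply: ex_argmin_seq.
  have r_cone : in_cone (0, 1) by split=> /=; lra.
  have ni1 : ((i.+1 %% n) < n)%N by rewrite ltn_pmod //; lia.
  by case: r_end => e; [exists i | exists (i.+1 %% n)%N]; rewrite ?mem_iota0 ?e.
have [k [kn [kc ek] kmin]] : exists k, [/\ k \in iota 0 n, in_cone (p k) /\ f k = f k1
    & forall j, j \in iota 0 n -> in_cone (p j) /\ f j = f k1 -> (p k).2 <= (p j).2].
  by apply: ex_argmin_seq; exists k1 => //; split.
exists k; first by rewrite -mem_iota0.
split=> // j nj jc; have jin : j \in iota 0 n by rewrite mem_iota0.
have [_ k2 _] := kc; have [_ j2 _] := jc.
have le_kj : f k <= f j by rewrite ek; apply: k1min.
split=> [|cross0]; first by move: le_kj; rewrite /f ler_ratio // /cross; lra.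
apply: kmin => //; split=> //; rewrite -ek; apply/le_anti/andP; split=> //.
by rewrite /f ler_ratio //; move: cross0; rewrite /cross; lra.
Qed.

Lemma first_no_vertex_inside {v m} : in_cone v -> first_in_cone v -> (m < n)%N ->
  ~ oseg (0, 0) v (p m).
Proof.
move=> [v1 v2 v3] vmin nm /oseg_origin [mu [mu0 mu1 e1 e2]].
have mc : in_cone (p m) by split; rewrite ?e1 ?e2; nra.
have [_ low] := vmin m nm mc.
have : v.2 <= (p m).2 by apply: low; rewrite /cross e1 e2; ring.
by rewrite e2; nra.
Qed.

(* Otherwise follow the edge from the crossing point to that endpoint: it has to leave
   the triangle through the edge i or through ]0,1[ x {0}, both impossible. *)
Lemma first_no_endpoint_right {v z j m} : in_cone v -> first_in_cone v -> oseg (0, 0) v z ->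
  (j < n)%N -> edge n p j z -> (m < n)%N -> edge n p j (p m) -> 0 <= cross v (p m).
Proof.
move=> vc vmin oz nj ej nm em; have [v1 v2 v3] := vc.
have [mu [mu0 mu1 z1 z2]] := oseg_origin oz.
rewrite leNgt; apply/negP => w_right.
have z_off : ~ edge n p i z by move/edge_on_diag; rewrite z1 z2; nra.
have w_out : 1 - ((p m).1 + (p m).2) <= 0 \/ (p m).2 <= 0.
  have [w2|w2] := leP (p m).2 0; [by right | left].
  rewrite subr_le0 leNgt; apply/negP => w_sum.
  have [w1|w1] := leP 0 (p m).1.
    by have [] := vmin m nm (And3 w1 w2 (ltW w_sum)); lra.
  by move: w_right; rewrite /cross; nra.
have [th [th0 th1 f_ge g_ge hit]] := exit_param (1 - (z.1 + z.2)) _ z.2 _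
  (ltac:(rewrite z1 z2; nra)) (ltac:(rewrite z2; nra)) w_out.
set y := affine z (p m) th.
have ey : edge n p j y := cseg_affine ej em (ltW th0) th1.
have y_sum : 1 - (y.1 + y.2) = 1 - (z.1 + z.2) +
    th * (1 - ((p m).1 + (p m).2) - (1 - (z.1 + z.2))) by rewrite /y /=; ring.
have y_2 : y.2 = z.2 + th * ((p m).2 - z.2) by [].
have y_right : cross v y < 0.
  have -> : cross v y = th * cross v (p m) by rewrite /cross /y /= z1 z2; ring.
  by rewrite pmulr_rlt0.
have y1 : 0 < y.1 by move: y_right; rewrite /cross; nra.
have [diag|off_diag] := eqVneq (y.1 + y.2) 1.
  have ji := edge_only_i nj ey (diag_on_edge diag (ltac:(lra)) (ltac:(lra))) y1 (ltac:(lra)).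
  by apply: z_off; rewrite -ji.
have y2_0 : y.2 = 0 by case: hit; move/eqP: off_diag; lra.
apply: (ox_free y.1 y1); first by move/eqP: off_diag; lra.
by exists j => //; rewrite (_ : (y.1, 0) = y) //; apply: point_eq.
Qed.

Lemma first_in_cone_sees v : in_cone v -> first_in_cone v -> sees n p (0, 0) v.
Proof.
move=> vc vmin z oz [j nj ej]; have [mu [mu0 [mu1 ez]]] := oz.
have v0 : (0, 0) <> v by move=> e; have [_ v2 _] := vc; move: v2; rewrite -e ltxx.
have nj1 : ((j.+1 %% n) < n)%N by rewrite ltn_pmod //; lia.
have := ej; rewrite ez => /(cseg_crossing v0 mu0 mu1) [[e ends e_bad]|o_in]; last first.
  by apply: o_out; exists j.
have [m nm em] : exists2 m, (m < n)%N & e = p m.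
  by case: ends => ->; [exists j | exists (j.+1 %% n)%N].
rewrite em vec0 in e_bad; case: e_bad => [|inside].
  have edge_m : edge n p j (p m) by rewrite -em; case: ends => ->; [apply: cseg_start | apply: cseg_end].
  by rewrite vec0 ltNge (first_no_endpoint_right vc vmin oz nj ej nm edge_m).
exact: first_no_vertex_inside vc vmin nm inside.
Qed.

Lemma unit_cone_visible :
  exists2 k, (k < n)%N & [/\ 0 <= (p k).1, 0 < (p k).2 & sees n p (0, 0) (p k)].
Proof.
have [k nk [kc k_first]] := exists_first_in_cone; have [k1 k2 _] := kc.
by exists k => //; split=> //; apply: first_in_cone_sees.
Qed.

End UnitCone.

Section Visibility.
Context {R : realFieldType} {n : nat} {p : nat -> point R}.
Hypothesis p_simple : simple_polygon n p.

(* Change coordinates so that a, q, r become (0,0), (1,0), (0,1). *)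
Lemma visible_in_cone {a q r i} : (i < n)%N -> edge n p i q ->
  p i <> q -> p (i.+1 %% n)%N <> q -> r = p i \/ r = p (i.+1 %% n)%N ->
  cross (vec a q) (vec a r) != 0 -> ~ polygon n p a -> sees n p a q ->
  exists2 k, visible n p a k & exists al be,
    [/\ 0 <= al, 0 < be & vec a (p k) = lincomb al (vec a q) be (vec a r)].
Proof.
move=> ni qi qs qt r_end c0 a_out a_q.
pose c := cross (vec a q) (vec a r).
pose F z : point R := (cross (vec a z) (vec a r) / c, cross (vec a q) (vec a z) / c).
have cramer z : vec a z = lincomb (F z).1 (vec a q) (F z).2 (vec a r).
  by apply: point_eq; rewrite /F /= -[c]/(cross _ _) /cross /=; field.
have F_affine x y th : F (affine x y th) = affine (F x) (F y) th.
  by apply: point_eq; rewrite /F /cross /=; field.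
have F_inj : injective F.
  move=> x y /(congr1 (fun u => lincomb u.1 (vec a q) u.2 (vec a r))).
  by rewrite -!cramer => /pair_equal_spec [e1 e2]; apply: point_eq; lra.
have Fa : F a = (0, 0) by apply: point_eq; rewrite /F /cross /=; field.
have Fq : F q = (1, 0) by apply: point_eq; rewrite /F /= ?divff // /cross /=; field.
have Fr : F r = (0, 1) by apply: point_eq; rewrite /F /= ?divff // /cross /=; field.
have [||||||k nk [k1 k2 vis]] := @unit_cone_visible R n (fun k => F (p k)) i
    (simple_map F_affine F_inj _ _ p_simple) ni.
- by rewrite -Fq; apply/(edge_map F_affine F_inj).
- by rewrite -Fq => /F_inj.
- by rewrite -Fq => /F_inj.
- by rewrite -Fr; case: r_end => <-; [left | right].
- by rewrite -Fa => /(polygon_map F_affine F_inj).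
- move=> l l0 l1; have -> : (l, 0) = F (affine a q l).
    by rewrite F_affine Fa Fq; apply: point_eq => /=; ring.
  by move/(polygon_map F_affine F_inj); apply: a_q; exists l.
exists k; first by split=> //; apply: (sees_map F_affine F_inj); rewrite Fa.
by exists (F (p k)).1, (F (p k)).2; split.
Qed.

Hypothesis n_gt1 : (1 < n)%N.

(* A collinear edge would have its nearer endpoint on [a, q[, or contain a. *)
Lemma first_hit_not_collinear a d l0 i (sg : R) : ~ polygon n p a -> d <> (0, 0) ->
  0 < l0 -> sees n p a (along a d l0) -> (i < n)%N -> 0 < sg -> sg < 1 ->
  along a d l0 = affine (p i) (p (i.+1 %% n)%N) sg ->
  cross d (vec a (p i)) = 0 -> cross d (vec a (p (i.+1 %% n)%N)) = 0 -> False.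
Proof.
move=> a_out d0 l0_pos a_q ni sg0 sg1 eq cs ct.
have ni1 : ((i.+1 %% n) < n)%N by rewrite ltn_pmod //; lia.
have a_off : ~ cseg (p i) (p (i.+1 %% n)%N) a by move=> h; apply: a_out; exists i.
have q_in : cseg (p i) (p (i.+1 %% n)%N) (along a d l0).
  by rewrite eq; exists sg; split; [apply: ltW | split; [apply: ltW |]].
move: (proj d (vec a (p i))) (proj d (vec a (p (i.+1 %% n)%N))) (along_proj d0 cs) (along_proj d0 ct).
move=> ls lt es et.
have hl0 : l0 = ls + sg * (lt - ls).
  apply: (along_inj (a := a) d0); rewrite eq; apply: point_eq => /=;
    rewrite es et /=; ring.
have st : ls != lt.
  apply/eqP => e; have := p_simple.1 i _ ni ni1 (nesym (modSn_neq _ _ n_gt1 ni)).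
  by rewrite es et e.
have near_vertex m (e : point R) : e = along a d m -> cseg (p i) (p (i.+1 %% n)%N) e ->
    polygon n p e -> m < l0 -> False.
  move=> -> he pe ml; apply: (sees_along a_out a_q _ ml pe).
  by apply: cseg_along_ge0 a_off he q_in (ltW ml) _; lra.
have [lt_st|lt_ts] := ltP ls lt.
  apply: near_vertex es (cseg_start _ _) (vertex_in_polygon ni) _.
  by rewrite hl0 ltrDl mulr_gt0 // subr_gt0.
apply: near_vertex et (cseg_end _ _) (vertex_in_polygon ni1) _.
rewrite hl0 (_ : ls + sg * (lt - ls) = lt + (1 - sg) * (ls - lt)); last by ring.
by rewrite ltrDl mulr_gt0 // subr_gt0 // lt_neqAle eq_sym st.
Qed.

(* In the second case [u] and [w] come from the cone lemma on both sides of the hit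
   edge [s, t]; they lie beyond the line through a parallel to [s, t] (take [e = t - s]),
   so they are not opposite as seen from a. *)
Lemma visible_near_ray a d : ~ polygon n p a -> d <> (0, 0) ->
  (exists x, ray a d x /\ polygon n p x) ->
  (exists2 k, visible n p a k & exists2 l, 0 < l & p k = along a d l)
  \/ exists u w, [/\ visible n p a u, visible n p a w,
      cross d (vec a (p u)) * cross d (vec a (p w)) < 0
    & exists e, 0 < cross e (vec a (p u)) * cross e (vec a (p w))].
Proof.
move=> a_out d0 hray; have [l0 [l0_pos q_in a_q]] := first_hit a_out d0 hray.
have [i ni qi] := q_in; have ni1 : ((i.+1 %% n) < n)%N by rewrite ltn_pmod //; lia.
have [qs|qs] := eqVneq (p i) (along a d l0).
  by left; exists i; [split=> //; rewrite qs | exists l0].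
have [qt|qt] := eqVneq (p (i.+1 %% n)%N) (along a d l0).
  by left; exists (i.+1 %% n)%N; [split=> //; rewrite qt | exists l0].
right; have [sg [sg0 [sg1 eq]]] := qi.
have sg_pos : 0 < sg.
  rewrite lt_neqAle sg0 andbT; apply/eqP => sg_0; move/eqP: qs; apply.
  by rewrite eq -sg_0; apply: point_eq => /=; ring.
have sg_lt1 : sg < 1.
  rewrite lt_neqAle sg1 andbT; apply/eqP => sg_1; move/eqP: qt; apply.
  by rewrite eq sg_1; apply: point_eq => /=; ring.
pose cs := cross d (vec a (p i)); pose ct := cross d (vec a (p (i.+1 %% n)%N)).
have hc : (1 - sg) * cs + sg * ct = 0.
  have <- : cross d (vec a (along a d l0)) = 0 by rewrite /cross /=; ring.
  by rewrite eq /cs /ct /cross /=; ring.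
have cs_nz : cs != 0.
  apply/eqP => cs0; have ct0 : ct = 0 by move: hc; rewrite cs0; nra.
  exact: first_hit_not_collinear a_out d0 l0_pos a_q ni sg_pos sg_lt1 eq cs0 ct0.
have csct : cs * ct < 0.
  have : 0 < cs ^+ 2 by rewrite lt0r sqrf_eq0 cs_nz sqr_ge0.
  by move: hc; nra.
have cone r : r = p i \/ r = p (i.+1 %% n)%N -> cross d (vec a r) != 0 ->
    exists2 k, visible n p a k & exists al be, [/\ 0 <= al, 0 < be &
      vec a (p k) = lincomb al (vec a (along a d l0)) be (vec a r)].
  move=> r_end cr; apply: (visible_in_cone ni qi (elimN eqP qs) (elimN eqP qt)
    r_end _ a_out a_q).
  rewrite (_ : cross _ _ = l0 * cross d (vec a r)); last by rewrite /cross /=; ring.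
  by rewrite mulf_neq0 // lt0r_neq0.
have [u u_vis [al [be [al0 be0 eu]]]] := cone _ (or_introl erefl) cs_nz.
have [w w_vis [al' [be' [al0' be0' ew]]]] := cone _ (or_intror erefl)
  (ltac:(by apply/eqP => ct0; move: csct; rewrite /ct ct0 mulr0 ltxx)).
exists u, w; split=> //.
  have -> : cross d (vec a (p u)) = be * cs by rewrite eu /cs /cross /=; ring.
  have -> : cross d (vec a (p w)) = be' * ct by rewrite ew /ct /cross /=; ring.
  by rewrite mulrACA pmulr_rlt0 // mulr_gt0.
pose K := cross (vec (p i) (p (i.+1 %% n)%N)) (vec a (p i)).
have K_nz : K != 0.
  have : l0 * cs = sg * K.
    transitivity (cross (vec a (along a d l0)) (vec a (p i))).
      by rewrite /cs /cross /=; ring.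
    by rewrite eq /K /cross /=; ring.
  move=> h; apply/eqP => K0; move: h; rewrite K0 mulr0 => /eqP.
  by rewrite mulf_eq0 (negbTE (lt0r_neq0 l0_pos)) (negbTE cs_nz).
exists (vec (p i) (p (i.+1 %% n)%N)).
have -> : cross (vec (p i) (p (i.+1 %% n)%N)) (vec a (p u)) = (al + be) * K.
  by rewrite eu eq /K /cross /=; ring.
have -> : cross (vec (p i) (p (i.+1 %% n)%N)) (vec a (p w)) = (al' + be') * K.
  by rewrite ew eq /K /cross /=; ring.
rewrite mulrACA; apply: mulr_gt0; first by apply: mulr_gt0; lra.
by rewrite -expr2 lt0r sqrf_eq0 K_nz sqr_ge0.
Qed.

End Visibility.

Section SeenFromA.
Context {R : realFieldType} {n : nat} {p : nat -> point R} {a : point R}.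
Hypotheses (p_simple : simple_polygon n p) (n_gt1 : (1 < n)%N)
  (a_out : ~ polygon n p a)
  (rays_hit : forall w : point R, w <> (0, 0) -> exists x, ray a w x /\ polygon n p x).

Let near_ray {d} (d0 : d <> (0, 0)) :=
  visible_near_ray p_simple n_gt1 a d a_out d0 (rays_hit d d0).

Lemma exists_visible : exists k, visible n p a k.
Proof.
have d0 : ((1, 0) : point R) <> (0, 0) by case=> /eqP; rewrite oner_eq0.
by case: (near_ray d0) => [[k vk _]|[u [w [vu _ _ _]]]]; [exists k | exists u].
Qed.

Lemma vec_vertex_neq0 {k} : (k < n)%N -> vec a (p k) <> (0, 0).
Proof.
move=> nk /pair_equal_spec [e1 e2]; apply: a_out.
by rewrite (_ : a = p k); [apply: vertex_in_polygon | apply: point_eq; lra].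
Qed.

(* If a sees two opposite vertices, look along the perpendicular direction: a vertex
   found there is off their line, and two vertices found on both sides of it cannot be
   the opposite pair, which lies in no open half-plane through a. *)
Lemma third_visible {k1 k2} {l : R} : (k1 < n)%N -> 0 < l ->
  p k2 = along a (vec (p k1) a) l -> exists2 k3, visible n p a k3 & k3 <> k1 /\ k3 <> k2.
Proof.
move=> nk1 l_pos e2; set x := vec a (p k1).
have x0 : x <> (0, 0) by apply: vec_vertex_neq0.
have d0 : ((- x.2, x.1) : point R) <> (0, 0).
  move=> /pair_equal_spec [e1 e1']; apply: x0; apply: point_eq; first exact: e1'.
  by rewrite -[x.2]opprK e1 oppr0.
have on_line k : k = k1 \/ k = k2 -> cross x (vec a (p k)) = 0.
  by case=> ->; rewrite ?e2 /x /cross /=; ring.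
have [[k3 vk3 [l3 l3_pos e3]]|[u [w [vu vw side [e pos]]]]] := near_ray d0.
  have off : cross x (vec a (p k3)) != 0.
    rewrite (_ : cross _ _ = l3 * (x.1 ^+ 2 + x.2 ^+ 2)); last by rewrite e3 /cross /=; ring.
    by rewrite mulf_neq0 // lt0r_neq0 // normsq_gt0.
  by exists k3 => //; split=> ek; move/eqP: off; apply; apply: on_line; [left | right].
have uw : u <> w by move=> uw; move: side; rewrite uw; nra.
have [u_new|u_old] := boolP ((u != k1) && (u != k2)).
  by exists u => //; case/andP: u_new => /eqP ? /eqP ?.
have [w_new|w_old] := boolP ((w != k1) && (w != k2)).
  by exists w => //; case/andP: w_new => /eqP ? /eqP ?.
have same : cross e (vec a (p u)) * cross e (vec a (p w)) =
    cross e (vec a (p k1)) * cross e (vec a (p k2)).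
  move: u_old w_old; rewrite !negb_and !negbK => /orP[]/eqP eu /orP[]/eqP ew;
    rewrite eu ew in uw *; first [done | by rewrite mulrC].
have opposite : cross e (vec a (p k2)) = - l * cross e (vec a (p k1)).
  by rewrite e2 /cross /=; ring.
by move: pos; rewrite same opposite; have := sqr_ge0 (cross e (vec a (p k1))); nra.
Qed.

Lemma three_visible : exists k1 k2 k3, [/\ visible n p a k1, visible n p a k2,
  visible n p a k3 & [/\ k1 <> k2, k2 <> k3 & k1 <> k3]].
Proof.
have [k1 vk1] := exists_visible; have [nk1 _] := vk1.
have d0 : vec (p k1) a <> (0, 0).
  by case=> e1 e2; apply: (vec_vertex_neq0 nk1); apply: point_eq => /=; lra.
have [[k2 vk2 [l l_pos e2]]|[u [w [vu vw side _]]]] := near_ray d0.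
  have k12 : k1 <> k2.
    move=> ek; apply: (vec_vertex_neq0 nk1).
    rewrite -ek in e2; have /= e1 := congr1 fst e2; have /= e1' := congr1 snd e2.
    have l1 : 1 + l != 0 by apply: lt0r_neq0; lra.
    by apply: point_eq => /=; apply: (mulIf l1); rewrite mul0r; lra.
  have [k3 vk3 [k31 k32]] := third_visible nk1 l_pos e2.
  by exists k1, k2, k3; split=> //; split=> //; apply: nesym.
have on_line : cross (vec (p k1) a) (vec a (p k1)) = 0 by rewrite /cross /=; ring.
exists k1, u, w; split=> //; split=> e.
- by move: side; rewrite -e on_line mul0r ltxx.
- by move: side; rewrite e; nra.
- by move: side; rewrite -e on_line mulr0 ltxx.
Qed.

End SeenFromA.

Lemma nonadjacent_of_three {n i j k} : (4 <= n)%N -> (i < n)%N -> (j < n)%N -> (k < n)%N ->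
  i <> j -> j <> k -> i <> k ->
  [\/ ~ adjacent_idx n i j, ~ adjacent_idx n j k | ~ adjacent_idx n i k].
Proof.
move=> n4 ni nj nk ij jk ik.
have succ x : (x < n)%N -> (x.+1 %% n = x.+1 /\ x.+1 < n)%N \/ (x.+1 %% n = 0 /\ x.+1 = n)%N.
  move=> xn; have [lt_xn|ge_xn] := ltnP x.+1 n; first by left; rewrite modn_small.
  by right; rewrite (_ : x.+1 = n) ?modnn; lia.
have [aij|] := classic (adjacent_idx n i j); last by constructor 1.
have [ajk|] := classic (adjacent_idx n j k); last by constructor 2.
have [aik|] := classic (adjacent_idx n i k); last by constructor 3.
exfalso; move: aij ajk aik (succ i ni) (succ j nj) (succ k nk); rewrite /adjacent_idx.
by move: (i.+1 %% n)%N (j.+1 %% n)%N (k.+1 %% n)%N; lia.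
Qed.

Theorem lemma4p2 (R : realType) (n : nat) (p : nat -> point R) (a : point R) :
  (4 <= n)%N ->
  simple_polygon n p ->
  ~ polygon n p a ->
  (forall w : point R, w <> (0, 0) ->
     exists x, ray a w x /\ polygon n p x) ->
  exists i j : nat,
    (i < n)%N /\ (j < n)%N /\ i <> j /\ ~ adjacent_idx n i j /\
    (forall x, oseg a (p i) x -> ~ polygon n p x) /\
    (forall x, oseg a (p j) x -> ~ polygon n p x).
Proof.
move=> n4 p_simple a_out rays_hit.
have [k1 [k2 [k3 [[n1 v1] [n2 v2] [n3 v3] [d12 d23 d13]]]]] :=
  three_visible p_simple (ltac:(lia)) a_out rays_hit.
have [] := nonadjacent_of_three n4 n1 n2 n3 d12 d23 d13 => h;
  [exists k1, k2 | exists k2, k3 | exists k1, k3]; by do !split.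
Qed.
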